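(* Let $d\ge 2$ and let $W_1,\dots,W_n$ be hyperplanes in $\mathbb R^d$ which do phase retrieval. Then $n\ge 2d-2$. Moreover, if $n=2d-2$ and $W_i^\perp=\operatorname{span}\{\phi_i\}$ for $i=1,\dots,2d-2$, then $\{\phi_i\}_{i=1}^{2d-2}$ is full spark.
   Context: A hyperplane is a subspace of dimension $d-1$. A family of subspaces $\{W_i\}$ with orthogonal projections $P_i$ does phase retrieval if whenever $x,y\in\mathbb R^d$ satisfy $\|P_ix\|=\|P_iy\|$ for all $i$, then $x=\pm y$. A family of vectors in $\mathbb R^d$ is full spark if every subset of $d$ of its vectors is linearly independent. *)

From Stdlib Require Import ClassicalEpsilon.
From mathcomp Require Import all_boot all_order all_algebra.
From mathcomp Require Import reals.
Set Implicit Arguments. Unset Strict Implicit. Unset Printing Implicit Defensive.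
Import Order.TTheory GRing.Theory Num.Theory.
Local Open Scope ring_scope.

Section Defs.
Variables (R : realType) (d : nat).

(* Vectors of R^d are row vectors 'rV[R]_d; a subspace is the row space of a
   square matrix W : 'M[R]_d; inner product <u,v> = (u *m v^T) 0 0. *)
Definition dotv (u v : 'rV[R]_d) : R := (u *m v^T) 0 0.
Definition vnorm (u : 'rV[R]_d) : R := Num.sqrt (dotv u u).

Definition hyperplane (W : 'M[R]_d) : Prop := \rank W = d.-1.

Definition orthocompl (W : 'M[R]_d) : 'M[R]_d := kermx W^T.

Definition is_orth_proj (W : 'M[R]_d) (x p : 'rV[R]_d) : Prop :=
  (p <= W)%MS /\ forall w : 'rV[R]_d, (w <= W)%MS -> dotv (x - p) w = 0.

(* The orthogonal projection P_W x (it exists and is unique). *)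
Definition orth_proj (W : 'M[R]_d) (x : 'rV[R]_d) : 'rV[R]_d :=
  epsilon (inhabits (0 : 'rV[R]_d)) (is_orth_proj W x).

Definition phase_retrieval (n : nat) (W : 'I_n -> 'M[R]_d) : Prop :=
  forall x y : 'rV[R]_d,
    (forall i, vnorm (orth_proj (W i) x) = vnorm (orth_proj (W i) y)) ->
    x = y \/ x = - y.

Definition full_spark (n : nat) (phi : 'I_n -> 'rV[R]_d) : Prop :=
  forall f : 'I_d -> 'I_n, injective f ->
    row_free (\matrix_(k < d) phi (f k)).

End Defs.

From Stdlib Require Import ClassicalEpsilon.
From mathcomp Require Import all_boot all_order all_algebra.
From mathcomp Require Import reals.
From mathcomp Require Import zify ring lra.
Import Order.TTheory GRing.Theory Num.Theory.
Local Open Scope ring_scope.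
Set Implicit Arguments. Unset Strict Implicit.

(* Write [W_i] as the orthogonal complement of a normal [phi_i].  Then
   [|P_i x|^2 = |x|^2 - <x, phi_i>^2 / |phi_i|^2], so for orthogonal [u], [v]
   the vectors [u + v] and [u - v] have projections of equal norm onto every
   [W_i] whose normal is orthogonal to [u] or to [v].  Phase retrieval thus
   forbids splitting the normals into two families orthogonal to nonzero
   orthogonal vectors [u] and [v].  If some [k] normals are orthogonal to a
   common [u != 0], the remaining [n - k] normals and [u] itself are at least
   [d] vectors, since otherwise a common orthogonal [v != 0] would exist; hence
   [k + d - 1 <= n].  Any [d - 1] normals are orthogonal to a common nonzero
   vector, giving [n >= 2d - 2]; and [d] linearly dependent normals would give
   [n >= 2d - 1]. *)

Section InnerProduct.
Variables (R : realType) (d : nat).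
Local Notation V := 'rV[R]_d.

Lemma dotvE (u v : V) : dotv u v = \sum_j u 0 j * v 0 j.
Proof. by rewrite /dotv !mxE; apply: eq_bigr => j _; rewrite mxE. Qed.

Lemma dotvC (u v : V) : dotv u v = dotv v u.
Proof. by rewrite !dotvE; apply: eq_bigr => j _; rewrite mulrC. Qed.

Lemma dotvDl (u v w : V) : dotv (u + v) w = dotv u w + dotv v w.
Proof. by rewrite /dotv mulmxDl mxE. Qed.

Lemma dotvNl (u w : V) : dotv (- u) w = - dotv u w.
Proof. by rewrite /dotv mulNmx mxE. Qed.

Lemma dotvZl a (u w : V) : dotv (a *: u) w = a * dotv u w.
Proof. by rewrite /dotv -scalemxAl mxE. Qed.

Lemma dotvDr (u v w : V) : dotv w (u + v) = dotv w u + dotv w v.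
Proof. by rewrite dotvC dotvDl !(dotvC w). Qed.

Lemma dotvNr (u w : V) : dotv w (- u) = - dotv w u.
Proof. by rewrite dotvC dotvNl dotvC. Qed.

Lemma dotvZr a (u w : V) : dotv w (a *: u) = a * dotv w u.
Proof. by rewrite dotvC dotvZl dotvC. Qed.

Lemma dotv_eq0 (u : V) : (dotv u u == 0) = (u == 0).
Proof.
apply/eqP/eqP => [|->]; last by rewrite /dotv mul0mx mxE.
rewrite dotvE => /eqP; rewrite psumr_eq0 => [/allP u0|j _]; last first.
  by rewrite -expr2 sqr_ge0.
apply/rowP => j; rewrite mxE.
by apply/eqP; rewrite -sqrf_eq0 expr2; apply: u0; rewrite mem_index_enum.
Qed.

Lemma sub_kermx_rV (u v : V) : (u <= kermx v^T)%MS = (dotv u v == 0).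
Proof.
rewrite sub_kermx; apply/eqP/eqP => uv0; first by rewrite /dotv uv0 mxE.
by apply/matrixP => i j; rewrite !ord1 [RHS]mxE.
Qed.

Lemma exists_orthogonal_rows k (A : 'M[R]_(k, d)) : (\rank A < d)%N ->
  exists2 u : V, u != 0 & forall j, dotv u (row j A) = 0.
Proof.
move=> rkA; have /rowV0Pn [u] : kermx A^T != 0.
  by rewrite -mxrank_eq0 mxrank_ker mxrank_tr subn_eq0 -ltnNge.
rewrite sub_kermx => /eqP uA0 u0; exists u => // j.
have /matrixP/(_ 0 j) := uA0; rewrite !mxE => <-.
by rewrite dotvE; apply: eq_bigr => l _; rewrite !mxE.
Qed.

Lemma exists_orthogonal_seq (s : seq V) : (size s < d)%N ->
  exists2 u : V, u != 0 & forall w, w \in s -> dotv u w = 0.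
Proof.
move=> lt_sd; set A := \matrix_(j < size s) s`_j.
have [u u0 us0] := exists_orthogonal_rows (leq_ltn_trans (rank_leq_row A) lt_sd).
exists u => // w ws; have lt_ws : (index w s < size s)%N by rewrite index_mem.
by have := us0 (Ordinal lt_ws); rewrite rowK /= nth_index.
Qed.

End InnerProduct.

Section Projection.
Variables (R : realType) (d : nat).
Local Notation V := 'rV[R]_d.

Lemma orth_projE (W : 'M[R]_d) (x p : V) :
  is_orth_proj W x p -> orth_proj W x = p.
Proof.
move=> [pW xpW]; have [qW xqW] : is_orth_proj W x (orth_proj W x).
  by apply: epsilon_spec; exists p.
have pqW : (p - orth_proj W x <= W)%MS by rewrite addmx_sub ?eqmx_opp.
have : dotv (p - orth_proj W x) (p - orth_proj W x) = 0.
  have {1}-> : p - orth_proj W x = (x - orth_proj W x) - (x - p).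
    by rewrite opprB [RHS]addrC addrA subrK.
  by rewrite dotvDl dotvNl xqW // xpW // subrr.
by move/eqP; rewrite dotv_eq0 subr_eq0 => /eqP.
Qed.

Lemma orth_proj_kermx (W : 'M[R]_d) (phi x : V) :
  phi != 0 -> (W == kermx phi^T)%MS ->
  orth_proj W x = x - (dotv x phi / dotv phi phi) *: phi.
Proof.
move=> phi0 /eqmxP eqW; have pp0 : dotv phi phi != 0 by rewrite dotv_eq0.
apply: orth_projE; split=> [|w]; rewrite eqW sub_kermx_rV.
  by rewrite dotvDl dotvNl dotvZl mulfVK ?subrr.
by move=> /eqP wphi; rewrite opprB addrC subrK dotvZl (dotvC phi) wphi mulr0.
Qed.

Lemma dotv_orth_proj_kermx (W : 'M[R]_d) (phi x : V) :
  phi != 0 -> (W == kermx phi^T)%MS ->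
  dotv (orth_proj W x) (orth_proj W x) =
  dotv x x - dotv x phi ^+ 2 / dotv phi phi.
Proof.
move=> phi0 eqW; have pp0 : dotv phi phi != 0 by rewrite dotv_eq0.
rewrite (orth_proj_kermx _ phi0 eqW) !(dotvDl, dotvNl, dotvDr, dotvNr, dotvZl, dotvZr).
by rewrite (dotvC phi x); field.
Qed.

Section Hyperplane.
Variable W : 'M[R]_d.
Hypotheses (d_gt0 : (0 < d)%N) (hypW : hyperplane W).

Lemma exists_normal : exists phi : V, (phi == orthocompl W)%MS.
Proof.
have rkK : \rank (orthocompl W) = 1%N.
  by rewrite mxrank_ker mxrank_tr hypW; lia.
have /rowV0Pn [u uK u0] : orthocompl W != 0 by rewrite -mxrank_eq0 rkK.
by exists u; case: (mxrank_leqif_eq uK) => _ <-; rewrite rank_rV u0 rkK.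
Qed.

Variable phi : V.
Hypothesis normal_phi : (phi == orthocompl W)%MS.

Lemma normal_neq0 : phi != 0.
Proof.
rewrite -mxrank_eq0 (eqmx_rank normal_phi) mxrank_ker mxrank_tr hypW; lia.
Qed.

Lemma hyperplane_kermx_normal : (W == kermx phi^T)%MS.
Proof.
have W_phi : (W <= kermx phi^T)%MS.
  have /andP [+ _] := normal_phi; rewrite !sub_kermx => /eqP phiW.
  by rewrite -(trmxK W) -trmx_mul phiW trmx0.
case: (mxrank_leqif_eq W_phi) => _ <-.
by rewrite mxrank_ker mxrank_tr rank_rV normal_neq0 hypW subn1.
Qed.

Lemma dotv_orth_proj_hyperplane (x : V) :
  dotv (orth_proj W x) (orth_proj W x) =
  dotv x x - dotv x phi ^+ 2 / dotv phi phi.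
Proof.
exact: dotv_orth_proj_kermx normal_neq0 hyperplane_kermx_normal.
Qed.

End Hyperplane.
End Projection.

Section PhaseRetrieval.
Variables (R : realType) (d n : nat) (W : 'I_n -> 'M[R]_d).
Variable phi : 'I_n -> 'rV[R]_d.
Hypotheses (d_gt0 : (0 < d)%N) (hypW : forall i, hyperplane (W i)).
Hypotheses (normal_phi : forall i, (phi i == orthocompl (W i))%MS).
Hypothesis PR : phase_retrieval W.

Lemma phase_retrieval_orthogonal_split (u v : 'rV[R]_d) : dotv u v = 0 ->
  (forall i, dotv u (phi i) = 0 \/ dotv v (phi i) = 0) -> u = 0 \/ v = 0.
Proof.
move=> uv0 split_phi; have vu0 : dotv v u = 0 by rewrite dotvC.
have [|eq_uv|eq_uNv] := PR (x := u + v) (y := u - v).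
- move=> i; rewrite /vnorm !(dotv_orth_proj_hyperplane d_gt0 (hypW i) (normal_phi i)).
  rewrite !(dotvDl, dotvNl, dotvDr, dotvNr) uv0 vu0.
  by case: (split_phi i) => ->; congr Num.sqrt; ring.
- right; apply/rowP => j; have /rowP/(_ j) := eq_uv; rewrite !mxE; lra.
- left; apply/rowP => j; have /rowP/(_ j) := eq_uNv; rewrite !mxE; lra.
Qed.

Lemma rank_deficient_subfamily_card k (g : 'I_k -> 'I_n) : injective g ->
  (\rank (\matrix_(j < k) phi (g j)) < d)%N -> (k + d.-1 <= n)%N.
Proof.
move=> g_inj /exists_orthogonal_rows [u u0 u_g].
set T := ~: (g @: setT).
have card_T : (k + #|T| = n)%N.
  by rewrite -[k]card_ord -cardsT -(card_imset _ g_inj) cardsC card_ord.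
rewrite leqNgt; apply/negP => lt_n.
have [|v v0 v_s] := @exists_orthogonal_seq _ _ (u :: map phi (enum T)).
  by rewrite /= size_map -cardE; lia.
have [] := @phase_retrieval_orthogonal_split u v.
- by rewrite dotvC v_s ?mem_head.
- move=> i; case: (boolP (i \in g @: setT)) => [/imsetP [j _ ->]|iT].
    by left; have := u_g j; rewrite rowK.
  by right; apply: v_s; rewrite inE map_f ?orbT // mem_enum inE iT.
- by move/eqP; rewrite (negPf u0).
- by move/eqP; rewrite (negPf v0).
Qed.

End PhaseRetrieval.

Theorem mainTheorem7 (R : realType) (d n : nat) (W : 'I_n -> 'M[R]_d) :
  (2 <= d)%N ->
  (forall i, hyperplane (W i)) ->
  phase_retrieval W ->
  (2 * d - 2 <= n)%N /\
  (n = (2 * d - 2)%N ->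
   forall phi : 'I_n -> 'rV[R]_d,
     (forall i, (phi i == orthocompl (W i))%MS) ->
     full_spark phi).
Proof.
move=> d_ge2 hypW PR; have d_gt0 : (0 < d)%N by lia.
split.
  have [phi normal_phi] := fin_all_exists (fun i => exists_normal d_gt0 (hypW i)).
  have le_kn : (minn d.-1 n <= n)%N := geq_minr _ _.
  have widen_inj : injective (widen_ord le_kn) by move=> i j [] /val_inj.
  have rk_lt : (\rank (\matrix_j phi (widen_ord le_kn j)) < d)%N.
    by apply: leq_ltn_trans (rank_leq_row _) _; lia.
  have := rank_deficient_subfamily_card d_gt0 hypW normal_phi PR widen_inj rk_lt.
  by clear -d_ge2; lia.
move=> n_eq phi normal_phi f f_inj; apply: contraT => not_free.
have rk_lt : (\rank (\matrix_(k < d) phi (f k)) < d)%N.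
  by rewrite ltn_neqAle rank_leq_col andbT.
have := rank_deficient_subfamily_card d_gt0 hypW normal_phi PR f_inj rk_lt.
by clear -d_ge2 n_eq; lia.
Qed.
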